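(* Let two independent walkers start at the origin and each take $n\ge1$ steps, each step being $(1,0)$ or $(0,1)$ with probability $1/2$ independently. The probability that their vertex sets have no point in common other than the origin is $\binom{2n}{n}/4^n$.
   Context: The vertex set of a walk $v_0=(0,0),v_1,\dots,v_n$ is $\{v_0,\dots,v_n\}$. *)

From HB Require Import structures.
From mathcomp Require Import all_boot all_order all_algebra.
Set Implicit Arguments. Unset Strict Implicit. Unset Printing Implicit Defensive.

(* A walk of n steps is encoded by its step sequence s : {ffun 'I_n -> bool};
   true = step (1,0), false = step (0,1). *)
Definition step (b : bool) : nat * nat := if b then (1, 0) else (0, 1).

Definition vtx n (s : {ffun 'I_n -> bool}) (k : nat) : nat * nat :=
  ((\sum_(i < n | i < k) (step (s i)).1)%N, (\sum_(i < n | i < k) (step (s i)).2)%N).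

Definition vset n (s : {ffun 'I_n -> bool}) : seq (nat * nat) :=
  [seq vtx s k | k <- iota 0 n.+1].

Definition only_origin_common n (s1 s2 : {ffun 'I_n -> bool}) : bool :=
  all (fun v => (v \in vset s2) ==> (v == (0, 0)%N)) (vset s1).

(* Uniform probability on the finite sample space of pairs of step sequences
   (all steps independent, each fair). *)
Definition prob_disjoint n : rat :=
  (#|[set p : {ffun 'I_n -> bool} * {ffun 'I_n -> bool} | only_origin_common p.1 p.2]|%:R
   / #|{: {ffun 'I_n -> bool} * {ffun 'I_n -> bool}}|%:R)%R.

From mathcomp Require Import all_boot all_order all_algebra.
From mathcomp Require Import zify ring.
Set Implicit Arguments. Unset Strict Implicit. Unset Printing Implicit Defensive.
Import GRing.Theory Num.Theory.

(* The k-th vertex of a walk lies on the antidiagonal x + y = k, so the vertex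
   sets meet only at the origin iff the horizontal lead D_k of the first walker
   over the second is nonzero for k = 1, ..., n.  A step of D is +1, 0, -1 with
   weights 1, 2, 1, i.e. two steps of a simple walk, so the numbers of pairs
   with D_1, ..., D_n nonzero and D_n = d are reflection-principle counts,
   C(2n-1, n-1+|d|) - C(2n-1, n+|d|).  Summing over |d| <= n telescopes to
   2 C(2n-1, n) = C(2n, n) pairs out of 4^n. *)

Section Walk.

Variable n : nat.
Implicit Types (s : {ffun 'I_n -> bool}) (k : nat).

Lemma sum_ord_lt_take (F : bool -> nat) s k : k <= n ->
  \sum_(i < n | i < k) F (s i) = \sum_(b <- take k (codom s)) F b.
Proof.
move=> kn; rewrite codomE -map_take big_map -[LHS]big_filter.
congr bigop; apply: (inj_map val_inj).
rewrite map_take val_enum_ord take_iota (minn_idPl kn).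
rewrite -(filter_map val (fun i => i < k)) /index_enum -enumT val_enum_ord.
exact: (filter_iota_ltn 0).
Qed.

Lemma vtxE s k : k <= n ->
  vtx s k = (count id (take k (codom s)), count negb (take k (codom s))).
Proof.
move=> kn; rewrite /vtx (sum_ord_lt_take (fun b => (step b).1)) //.
rewrite (sum_ord_lt_take (fun b => (step b).2)) // -!sum1_count.
by congr pair; rewrite [RHS]big_mkcond; apply: eq_bigr => -[].
Qed.

Lemma vtx_sum s k : k <= n -> (vtx s k).1 + (vtx s k).2 = k.
Proof.
move=> kn; rewrite vtxE //= count_predC size_take_min size_codom card_ord.
exact: minn_idPl.
Qed.

Lemma eq_vtx s1 s2 k : k <= n ->
  (vtx s1 k == vtx s2 k) = ((vtx s1 k).1 == (vtx s2 k).1).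
Proof.
move=> kn; apply/eqP/eqP => [-> // | e1].
have e2 : (vtx s1 k).2 = (vtx s2 k).2.
  by apply: (@addnI (vtx s1 k).1); rewrite {2}e1 !vtx_sum.
by move: e1 e2; case: (vtx s1 k) (vtx s2 k) => [x1 y1] [x2 y2] /= -> ->.
Qed.

Lemma vtx_eq0 s k : k <= n -> (vtx s k == (0, 0)) = (k == 0).
Proof.
move=> kn; rewrite -{2}(vtx_sum s kn).
by case: (vtx s k) => [[|x] [|y]].
Qed.

Lemma only_origin_commonE s1 s2 :
  only_origin_common s1 s2 = all (fun k => vtx s1 k != vtx s2 k) (iota 1 n).
Proof.
have mem_vset s v : reflect (exists2 k, k <= n & v = vtx s k) (v \in vset s).
  by apply: (iffP mapP) => -[k kn ->]; exists k; rewrite // mem_iota ltnS in kn *.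
apply/allP/allP => [H k | H _ /mem_vset [k kn ->]].
  rewrite mem_iota add1n ltnS => /andP [k_gt0 kn]; apply/eqP => e.
  have in1 : vtx s1 k \in vset s1 by apply/mem_vset; exists k.
  have in2 : vtx s1 k \in vset s2 by apply/mem_vset; exists k.
  by move: (H _ in1); rewrite in2 vtx_eq0 // eqn0Ngt k_gt0.
apply/implyP => /mem_vset [j jn e]; rewrite vtx_eq0 //.
have kj : k = j by rewrite -(vtx_sum s1 kn) -(vtx_sum s2 jn) e.
subst j; apply: contraT => k_neq0.
have /H : k \in iota 1 n by rewrite mem_iota add1n ltnS lt0n k_neq0.
by rewrite e eqxx.
Qed.

End Walk.

Local Open Scope ring_scope.

Definition lead (l1 l2 : seq bool) : int := (count id l1)%:Z - (count id l2)%:Z.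

Definition apart (l1 l2 : seq bool) : bool :=
  all (fun k => lead (take k l1) (take k l2) != 0) (iota 1 (size l1)).

Lemma only_origin_common_apart n (s1 s2 : {ffun 'I_n -> bool}) :
  only_origin_common s1 s2 = apart (codom s1) (codom s2).
Proof.
rewrite only_origin_commonE /apart size_codom card_ord.
apply: eq_in_all => k; rewrite mem_iota add1n ltnS => /andP [_ kn].
by rewrite eq_vtx // !vtxE // /lead subr_eq0 eqz_nat.
Qed.

Lemma lead_rcons l1 l2 b1 b2 :
  lead (rcons l1 b1) (rcons l2 b2) = lead l1 l2 - ((b2 : nat)%:Z - (b1 : nat)%:Z).
Proof. by rewrite /lead -!cats1 !count_cat /= !addn0 !PoszD; ring. Qed.

Lemma apart_rcons l1 l2 b1 b2 : size l1 = size l2 ->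
  apart (rcons l1 b1) (rcons l2 b2) =
  apart l1 l2 && (lead (rcons l1 b1) (rcons l2 b2) != 0).
Proof.
move=> e; rewrite /apart size_rcons -(addn1 (size l1)) iotaD all_cat /= andbT add1n.
rewrite !take_oversize ?size_rcons ?e //; congr andb.
apply: eq_in_all => k; rewrite mem_iota add1n ltnS => /andP [_ kn].
by rewrite -!cats1 !takel_cat // e.
Qed.

Fixpoint bitseqs n : seq (seq bool) :=
  if n is m.+1 then [seq rcons l b | l <- bitseqs m, b <- [:: true; false]]
  else [:: [::]].

Lemma mem_bitseqs n l : (l \in bitseqs n) = (size l == n).
Proof.
elim: n l => [|n IH] l; first by case: l.
apply/allpairsP/idP => [[[l' b] [/= l'_in _ ->]]|].
  by rewrite size_rcons eqSS -IH.
case/lastP: l => [//|l b]; rewrite size_rcons eqSS => sz.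
by exists (l, b); split => //=; [rewrite IH | case: b].
Qed.

Lemma uniq_bitseqs n : uniq (bitseqs n).
Proof.
elim: n => [//|n IH].
by apply: allpairs_uniq => // -[l1 b1] [l2 b2] _ _ /= /rcons_inj.
Qed.

Lemma big_ffun_bitseqs (R : Type) (idx : R) (op : Monoid.com_law idx) n
    (F : seq bool -> R) :
  \big[op/idx]_(f : {ffun 'I_n -> bool}) F (codom f) = \big[op/idx]_(l <- bitseqs n) F l.
Proof.
rewrite -(big_map (fun f : {ffun 'I_n -> bool} => codom f) xpredT).
apply: perm_big; apply: uniq_perm.
- rewrite map_inj_uniq ?index_enum_uniq // => f g e.
  by apply/ffunP => i; rewrite -!(nth_fgraph_ord false) -!codom_ffun e.
- exact: uniq_bitseqs.
move=> l; rewrite mem_bitseqs; apply/mapP/eqP => [[f _ ->]|sz].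
  by rewrite size_codom card_ord.
exists [ffun i : 'I_n => nth false l i]; first by rewrite mem_index_enum.
apply: (@eq_from_nth _ false) => [|i i_lt]; first by rewrite size_codom card_ord.
rewrite sz in i_lt.
by rewrite codom_ffun (nth_fgraph_ord _ (Ordinal i_lt)) ffunE.
Qed.

Lemma sum_apart_lead_rcons l1 l2 (d : int) : size l1 = size l2 ->
  \sum_(b1 <- [:: true; false]) \sum_(b2 <- [:: true; false])
     (apart (rcons l1 b1) (rcons l2 b2) && (lead (rcons l1 b1) (rcons l2 b2) == d))%:R
  = (d != 0)%:R * ((apart l1 l2 && (lead l1 l2 == d - 1))%:R
     + 2 * (apart l1 l2 && (lead l1 l2 == d))%:R
     + (apart l1 l2 && (lead l1 l2 == d + 1))%:R) :> int.
Proof.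
move=> sz; rewrite !big_cons !big_nil !apart_rcons // !lead_rcons.
have neq0_eq (y : int) : (y != 0) && (y == d) = (d != 0) && (y == d).
  by case: (eqVneq y d) => [->|]; rewrite ?andbF.
rewrite -!andbA !neq0_eq !(subr_eq (lead l1 l2)) /= !(subr0, sub0r, subrr, addr0).
by case: (apart l1 l2) (d != 0) => [] []; rewrite /= ?mul0r ?mul1r //; ring.
Qed.

Definition apart_count n (d : int) : int :=
  \sum_(l1 <- bitseqs n) \sum_(l2 <- bitseqs n) (apart l1 l2 && (lead l1 l2 == d))%:R.

Lemma apart_countS n d :
  apart_count n.+1 d =
  (d != 0)%:R * (apart_count n (d - 1) + 2 * apart_count n d + apart_count n (d + 1)).
Proof.
have bitseqsS : bitseqs n.+1 = [seq rcons l b | l <- bitseqs n, b <- [:: true; false]].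
  by [].
rewrite /apart_count bitseqsS big_allpairs_dep.
under eq_bigr => l1 _ do under eq_bigr => b1 _ do rewrite big_allpairs_dep.
under eq_bigr => l1 _ do rewrite exchange_big.
rewrite !mulr_sumr -!big_split mulr_sumr; apply: eq_big_seq => l1 l1_in.
rewrite !mulr_sumr -!big_split mulr_sumr; apply: eq_big_seq => l2 l2_in.
rewrite -sum_apart_lead_rcons; last first.
  by move: l1_in l2_in; rewrite !mem_bitseqs => /eqP -> /eqP ->.
by rewrite !big_cons !big_nil.
Qed.

Lemma apart_count0 d : apart_count 0 d = (d == 0)%:R.
Proof. by rewrite /apart_count /= !big_cons !big_nil /apart /lead /= subrr !addr0 eq_sym. Qed.

(* Walks of 2k+1 steps +-1 from 1 to 2j that never visit 0. *)
Definition ballot k j : int := 'C(2 * k + 1, k + j)%:R - 'C(2 * k + 1, k + j + 1)%:R.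

Lemma bin_odd_mid k : 'C(2 * k + 1, k) = 'C(2 * k + 1, k + 1).
Proof.
rewrite -[X in 'C(_, X) = _](_ : 2 * k + 1 - (k + 1) = k)%N; last by lia.
by rewrite bin_sub //; lia.
Qed.

Lemma ballot0 k : ballot k 0 = 0.
Proof. by rewrite /ballot addn0 bin_odd_mid subrr. Qed.

Lemma binSS n m : 'C(n.+2, m.+2) = ('C(n, m) + 2 * 'C(n, m.+1) + 'C(n, m.+2))%N.
Proof. rewrite !binS; lia. Qed.

Lemma ballotSS k j : ballot k.+1 j.+1 = ballot k j + 2 * ballot k j.+1 + ballot k j.+2.
Proof.
rewrite /ballot (_ : 2 * k.+1 + 1 = (2 * k + 1).+2)%N; last by lia.
by rewrite !(addSn, addnS, addn1) !binSS !natrD; ring.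
Qed.

Lemma apart_count_ballot k d : apart_count k.+1 d = ballot k `|d|%N.
Proof.
elim: k d => [|k IH] d.
  by rewrite apart_countS !apart_count0 /ballot; case: d => [[|[|j]]|[|j]].
rewrite apart_countS !IH.
case: d => [[|j]|j] /=.
- by rewrite mul0r ballot0.
- by rewrite mul1r subn1 addn1 /= ballotSS.
rewrite (_ : absz (Negz j + 1) = j); last by rewrite NegzE -addn1 PoszD opprD subrK abszN.
by rewrite addn0 mul1r ballotSS; ring.
Qed.

Fixpoint sym_iota m : seq int :=
  if m is m'.+1 then m%:Z :: - m%:Z :: sym_iota m' else [:: 0].

Lemma mem_sym_iota m x : (x \in sym_iota m) = (`|x| <= m)%N.
Proof.
elim: m => [|m IH] /=; first by rewrite inE; case: x => [[|]|].
by rewrite !inE IH; apply/idP/idP; lia.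
Qed.

Lemma uniq_sym_iota m : uniq (sym_iota m).
Proof. by elim: m => [//|m IH] /=; rewrite IH !inE !mem_sym_iota andbT; lia. Qed.

Lemma sum_ballot k m : \sum_(d <- sym_iota m) ballot k `|d|%N =
  2 * ('C(2 * k + 1, k + 1)%:R - 'C(2 * k + 1, k + m + 1)%:R).
Proof.
elim: m => [|m IH]; first by rewrite big_seq1 ballot0 addn0 subrr mulr0.
rewrite /= !big_cons IH abszN /ballot /= (_ : k + m.+1 = k + m + 1)%N; last by lia.
ring.
Qed.

Lemma apart_sum_lead n l1 l2 : l1 \in bitseqs n -> l2 \in bitseqs n ->
  (apart l1 l2)%:R = \sum_(d <- sym_iota n) (apart l1 l2 && (lead l1 l2 == d))%:R :> int.
Proof.
rewrite !mem_bitseqs => /eqP sz1 /eqP sz2.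
have lead_in : lead l1 l2 \in sym_iota n.
  rewrite mem_sym_iota /lead; move: (count_size id l1) (count_size id l2).
  by rewrite sz1 sz2; lia.
rewrite (big_rem _ lead_in) eqxx andbT big1_seq /= ?addr0 // => d.
rewrite mem_rem_uniq ?uniq_sym_iota // inE => /andP [/negbTE lead_neq _].
by rewrite eq_sym lead_neq andbF.
Qed.

Lemma sum_apart n :
  \sum_(l1 <- bitseqs n) \sum_(l2 <- bitseqs n) (apart l1 l2)%:R
  = \sum_(d <- sym_iota n) apart_count n d :> int.
Proof.
under eq_big_seq => l1 l1_in do under eq_big_seq => l2 l2_in do
  rewrite (apart_sum_lead l1_in l2_in).
rewrite /apart_count; under eq_bigr => l1 _ do rewrite exchange_big.
by rewrite exchange_big.
Qed.

Lemma sum_apart_bin n : (0 < n)%N ->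
  \sum_(l1 <- bitseqs n) \sum_(l2 <- bitseqs n) (apart l1 l2)%:R = 'C(2 * n, n)%:R :> int.
Proof.
case: n => [//|k] _.
rewrite sum_apart; under eq_bigr => d _ do rewrite apart_count_ballot.
rewrite sum_ballot (@bin_small (2 * k + 1) (k + k.+1 + 1)) ?subr0; last by lia.
rewrite (_ : 2 * k.+1 = (2 * k + 1).+1)%N; last by lia.
by rewrite binS -[k.+1]addn1 bin_odd_mid natrD; ring.
Qed.

Lemma card_only_origin_common n : (0 < n)%N ->
  #|[set p : {ffun 'I_n -> bool} * {ffun 'I_n -> bool} | only_origin_common p.1 p.2]|
  = 'C(2 * n, n).
Proof.
move=> n_gt0; apply/eqP; rewrite -(eqr_nat int) -sum_apart_bin //.
rewrite -sum1dep_card natr_sum big_mkcond.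
rewrite -(pair_bigA _ (fun f1 f2 => if only_origin_common f1 f2 then 1 else 0)) /=.
under eq_bigr => f1 _ do under eq_bigr => f2 _ do rewrite only_origin_common_apart.
under eq_bigr => f1 _ do
  rewrite (big_ffun_bitseqs _ n (fun l2 => if apart (codom f1) l2 then 1 else 0 : int)).
rewrite (big_ffun_bitseqs _ n
  (fun l1 => \sum_(l2 <- bitseqs n) (if apart l1 l2 then 1 else 0 : int))).
by apply/eqP; apply: eq_bigr => l1 _; apply: eq_bigr => l2 _; case: apart.
Qed.

Theorem corollary2 (n : nat) (hn : (1 <= n)%N) :
  prob_disjoint n = ('C(2 * n, n)%:R / (4 ^ n)%:R)%R.
Proof.
rewrite /prob_disjoint card_only_origin_common // card_prod.
by rewrite !card_ffun card_bool card_ord -expnMn.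
Qed.
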